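(* Let $a,b$ be integers and let $G\in\mathscr{G}_{a,b}$ be a graph containing a cycle and having at least one pendant vertex. If $v_0v_1\ldots v_k$ is a longest pendant path in $G$, then $k=1$.
   Context: All graphs are simple and connected; $d_G(v)$ is the degree of $v$, $N_G(v)$ its neighbourhood. For integers $a,b$, $\mathscr{G}_{a,b}$ is the set of connected graphs $G$ such that for every $v\in V_G$, $\sum_{u\in N_G(v)}d_G(u)=a\,d_G(v)+b-d_G(v)^2$. A pendant vertex is a vertex of degree $1$; $PV(G)$ is the set of pendant vertices. The base $\widetilde{G}$ of $G$ is the subgraph obtained from $G$ by repeatedly deleting pendant vertices until none remain. If $G$ contains a cycle and $PV(G)\neq\emptyset$, a longest pendant path is a longest path $v_0v_1\ldots v_k$ with $v_0\in PV(G)$, $v_i\notin V_{\widetilde G}$ for $1\le i\le k-1$, and $v_k\in V_{\widetilde G}$. *)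

From mathcomp Require Import all_boot all_order all_algebra.
Set Implicit Arguments. Unset Strict Implicit. Unset Printing Implicit Defensive.
Import GRing.Theory Num.Theory.

Section Graphs.
Variable T : finType.
Variable e : rel T.

Definition simple_graph : Prop := irreflexive e /\ symmetric e.
Definition connected_graph : Prop := forall x y : T, connect e x y.

Definition nbhd (v : T) : {set T} := [set u | e v u].
Definition deg (v : T) : nat := #|nbhd v|.

Definition in_Gab (a b : int) : Prop :=
  forall v : T,
    ((\sum_(u in nbhd v) deg u)%:Z = a * (deg v)%:Z + b - (deg v)%:Z ^+ 2)%R.

Definition has_cycle : Prop :=
  exists s : seq T, [&& 3 <= size s, uniq s & cycle e s].

Definition pendant (v : T) : bool := deg v == 1.

Definition deg_in (S : {set T}) (v : T) : nat := #|[set u in S | e v u]|.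

Definition prune (S : {set T}) : {set T} := [set v in S | deg_in S v != 1].

(* vertex set of the base: pendant deletion iterated until stable
   (#|T| rounds suffice since each non-stable round deletes a vertex) *)
Definition base : {set T} := iter #|T| prune setT.

Definition pendant_path (s : seq T) : bool :=
  if s is v0 :: t then
    [&& path e v0 t, uniq s, pendant v0,
        last v0 t \in base &
        all (fun x => x \notin base) (drop 1 (belast v0 t))]
  else false.

End Graphs.

From mathcomp Require Import all_boot all_order all_algebra zify.
Set Implicit Arguments. Unset Strict Implicit. Unset Printing Implicit Defensive.
Import GRing.Theory.

(* Suppose a longest pendant path v0 v1 v2 ... vk had k >= 2.  The vertex v1
   is deleted in some pruning round i, while the path v1 ... vk survives up to
   that round, so v2 is the only neighbour of v1 left at round i.  A neighbour
   of v1 deleted earlier that is not itself pendant is the end of a pendant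
   path lying outside the round-i vertex set, and gluing it to v1 ... vk gives
   a longer pendant path.  So all neighbours of v1 other than v2 are pendant.
   The G_{a,b} equations at v0, v1 and v2 then force all neighbours of v2
   other than v1 to be pendant as well, so the connected graph G is a double
   star around the edge v1 v2 and has no cycle. *)

Section ShrinkIteration.
Variables (T : finType) (f : {set T} -> {set T}).
Hypothesis f_sub : forall X, f X \subset X.

Lemma iter_shrink_fixed_or_small i :
  f (iter i f setT) = iter i f setT \/ #|iter i f setT| + i <= #|T|.
Proof.
elim: i => [|i IH]; first by right; rewrite cardsT addn0.
rewrite iterS; set X := iter i f setT in IH *.
have [fX|fX] := eqVneq (f X) X; first by left; rewrite fX.
case: IH => [/eqP|le_X]; first by rewrite (negbTE fX).
right; have /proper_card : f X \proper X by rewrite properEneq fX f_sub.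
lia.
Qed.

Lemma iter_shrink_fixed : f (iter #|T| f setT) = iter #|T| f setT.
Proof.
case: (iter_shrink_fixed_or_small #|T|) => // small.
have /eqP -> : iter #|T| f setT == set0 by rewrite -cards_eq0; lia.
by apply/eqP; rewrite -subset0 f_sub.
Qed.

End ShrinkIteration.

Section ChainArith.
Local Open Scope ring_scope.

(* With c = deg v1, D = deg v2 and X the sum of deg u - 1 over the neighbours
   u <> v1 of v2, these are the G_{a,b} equations at v0, v1 and v2 of a
   pendant path v0 v1 v2 whose vertex v1 has only pendant neighbours besides
   v2.  Eliminating a and D leaves X = -(c-1)(c-2) b(b+1), which is <= 0. *)
Lemma Gab_chain_arith (a b : int) (c D X : nat) : (0 < c)%N -> (0 < D)%N ->
  c%:Z = a + b - 1 ->
  (D + (c - 1))%:Z = a * c%:Z + b - c%:Z ^+ 2 ->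
  (c + (D - 1) + X)%:Z = a * D%:Z + b - D%:Z ^+ 2 -> X = 0%N.
Proof.
move=> c_gt0 D_gt0 h0 h1 h2.
have ha : a = c%:Z + 1 - b by lia.
subst a.
have hD : D%:Z = 1 - b * (c%:Z - 1) by rewrite expr2 in h1; nia.
have hX : X%:Z = - ((c%:Z - 1) * (c%:Z - 2)) * (b * (b + 1)).
  by rewrite expr2 in h2; nia.
have p1 : 0 <= (c%:Z - 1) * (c%:Z - 2) by nia.
have p2 : 0 <= b * (b + 1) by nia.
nia.
Qed.

End ChainArith.

Section Graph.
Variables (T : finType) (e : rel T).
Hypothesis e_sym : symmetric e.

Definition stage i := iter i (prune e) setT.

Lemma prune_subset (X : {set T}) : prune e X \subset X.
Proof. by apply/subsetP => v; rewrite inE => /andP[]. Qed.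

Lemma stage_sub i j : i <= j -> stage j \subset stage i.
Proof.
move/subnKC <-; elim: (j - i) => [|n IH]; first by rewrite addn0.
by rewrite addnS; apply: subset_trans (prune_subset _) IH.
Qed.

Lemma prune_base : prune e (base e) = base e.
Proof. exact: iter_shrink_fixed prune_subset. Qed.

Lemma stage_leave v n : v \notin stage n ->
  exists2 i, i < n & (v \in stage i) && (v \notin stage i.+1).
Proof.
elim: n => [|n IH]; first by rewrite inE.
move=> vn; have [vn'|vn'] := boolP (v \in stage n); first by exists n; rewrite ?vn'.
by have [i lt_in vi] := IH vn'; exists i => //; apply: ltnW.
Qed.

Lemma deg_in_le_deg (X : {set T}) v : deg_in e X v <= deg e v.
Proof. by apply: subset_leq_card; apply/subsetP => u; rewrite !inE => /andP[]. Qed.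

Lemma deg_in_gt1 (X : {set T}) y u1 u2 : u1 != u2 -> u1 \in X -> u2 \in X ->
  e y u1 -> e y u2 -> 1 < deg_in e X y.
Proof.
move=> u12 u1X u2X eyu1 eyu2.
have /subset_leq_card : [set u1; u2] \subset [set u in X | e y u].
  by apply/subsetP => u; rewrite !inE => /orP[] /eqP ->; rewrite ?u1X ?u2X ?eyu1 ?eyu2.
by rewrite cards2 u12.
Qed.

Lemma deg_in_pruned (X : {set T}) v : v \in X -> v \notin prune e X -> deg_in e X v = 1.
Proof. by move=> vX; rewrite inE vX negbK => /eqP. Qed.

Lemma deg_gt0 v x : e v x -> 0 < deg e x.
Proof. by move=> evx; apply/card_gt0P; exists v; rewrite inE e_sym. Qed.

Lemma pendant_nbhd v w : deg e v = 1 -> e v w -> nbhd e v = [set w].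
Proof.
move=> /eqP /cards1P [u nbv] evw; have : w \in nbhd e v by rewrite inE.
by rewrite nbv inE => /eqP ->.
Qed.

Lemma pendant_pruned (X : {set T}) v w : deg e v = 1 -> e v w -> w \in X ->
  v \notin prune e X.
Proof.
move=> dv evw wX.
have dX : deg_in e X v = 1.
  have : deg_in e X v <= 1 by rewrite -dv deg_in_le_deg.
  have : 0 < deg_in e X v by apply/card_gt0P; exists w; rewrite inE wX.
  lia.
by rewrite inE dX eqxx andbF.
Qed.

Lemma pendant_notin_base v : deg e v = 1 -> v \notin base e.
Proof.
move=> dv; have /card_gt0P [w] : 0 < deg e v by rewrite dv.
rewrite inE => evw; have [wB|wB] := boolP (w \in base e).
  by rewrite -prune_base (pendant_pruned dv evw wB).
have [i iT /andP[wi _]] := stage_leave wB.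
apply: contra (pendant_pruned dv evw wi) => vB.
exact: subsetP (stage_sub iT) v vB.
Qed.

(* An interior vertex of the path has two distinct neighbours on it, so it is
   not pendant inside X. *)
Lemma path_in_prune (X : {set T}) x p : path e x p -> uniq (x :: p) ->
  all (fun y => y \in X) (x :: p) -> x \in prune e X -> last x p \in prune e X ->
  all (fun y => y \in prune e X) (x :: p).
Proof.
elim: p x => [|y p IH] x /=; first by move=> _ _ _ ->.
move=> /andP[exy pyp] /andP[xn uyp] /and3P[xX yX pX] xP lP.
rewrite xP /=; apply: IH => //=; first by rewrite yX.
case: p pyp xn uyp pX lP => [|z p] /=; first by move=> _ _ _ _ ->.
move=> /andP[eyz _]; rewrite !inE !negb_or => /andP[_ /andP[xz _]] _ /andP[zX _] _.
by rewrite yX neq_ltn (deg_in_gt1 xz xX zX) ?orbT // e_sym.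
Qed.

Lemma path_in_stage x p i : path e x p -> uniq (x :: p) ->
  last x p \in base e -> i <= #|T| -> x \in stage i ->
  all (fun y => y \in stage i) (x :: p).
Proof.
move=> pxp uxp lB; elim: i => [|i IH] iT xi; first by apply/allP => y; rewrite inE.
have xi' : x \in stage i by apply: subsetP (stage_sub (leqnSn i)) x xi.
apply: path_in_prune (IH (ltnW iT) xi') xi _ => //.
exact: subsetP (stage_sub iT) _ lB.
Qed.

(* A vertex deleted in round i is pendant or has a neighbour deleted in an
   earlier round. *)
Lemma pendant_path_into i w : w \notin stage i -> exists z q,
  [/\ path e z q /\ last z q = w, uniq (z :: q), pendant e z,
      all (fun y => y \notin stage i) (z :: q) & (deg e w != 1 -> 0 < size q)].
Proof.
have notin_S j y : y \notin stage j -> y \notin stage j.+1.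
  by apply: contra; apply: subsetP (prune_subset _) y.
elim: i w => [|i IH] w; first by rewrite inE.
move=> wS; have [wSi|wSi] := boolP (w \in stage i); last first.
  have [z [q [pzq uq pz outq ne]]] := IH w wSi.
  by exists z, q; split=> //; apply/allP => y /(allP outq); apply: notin_S.
have [dw|dw] := eqVneq (deg e w) 1.
  by exists w, [::]; split; rewrite //= ?andbT /pendant ?dw.
have [y ewy ySi] : exists2 y, e w y & y \notin stage i.
  have lt_dw : deg_in e (stage i) w < deg e w.
    by rewrite ltn_neqAle deg_in_le_deg andbT (deg_in_pruned wSi wS) eq_sym dw.
  have /subsetPn [y] : ~~ (nbhd e w \subset [set u in stage i | e w u]).
    by apply: contraTN lt_dw => /subset_leq_card; rewrite leqNgt.
  by rewrite !inE => ewy; rewrite ewy andbT; exists y.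
have [z [q [[pq lq] uq pz outq _]]] := IH y ySi.
exists z, (rcons q w); split => //.
- by rewrite rcons_path pq lq e_sym last_rcons.
- rewrite -rcons_cons rcons_uniq uq andbT.
  by apply/negP => /(allP outq); rewrite wSi.
- rewrite -rcons_cons all_rcons wS.
  by apply/allP => u /(allP outq); apply: notin_S.
- by rewrite size_rcons.
Qed.

Lemma pendant_path_splice v0 v1 t z q :
  pendant_path e [:: v0, v1 & t] ->
  path e z q -> e (last z q) v1 -> uniq (z :: q) -> pendant e z ->
  all (fun y => y \notin base e) (z :: q) -> ~~ has (mem (z :: q)) (v1 :: t) ->
  pendant_path e (z :: q ++ v1 :: t).
Proof.
case/and5P => /andP[_ pt] /andP[_ ut] _ lt int pq eq uq pz outq dis.
rewrite /= drop0 in int.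
apply/and5P; split => //.
- by rewrite cat_path pq /= eq.
- by rewrite -cat_cons cat_uniq uq dis.
- by rewrite last_cat.
apply/allP => y /mem_drop; rewrite belast_cat mem_cat /= inE.
case/or3P => [/mem_belast|/eqP ->|/(allP int)] //; apply: (allP outq).
exact: mem_last.
Qed.

Lemma cycle_deg_gt1 s x : cycle e s -> uniq s -> 3 <= size s -> x \in s ->
  1 < deg e x.
Proof.
move=> cs us ss xs; case/splitPr: xs cs us ss => p1 p2 cs us ss.
move: us; rewrite -(rot_uniq (size p1) (p1 ++ x :: p2)) rot_size_cat => us.
rewrite -(rot_cycle (size p1)) rot_size_cat in cs.
have ss' : 2 <= size (p2 ++ p1) by move: ss; rewrite !size_cat /=; lia.
rewrite cat_cons in cs us.
case: (p2 ++ p1) cs us ss' => [|y [|w r]] //=.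
move=> /and3P[exy _]; rewrite rcons_path => /andP[_ ezx] /and4P[_ yn _ _] _.
set z := last w r in ezx.
have yz : y != z by apply: contraNneq yn => ->; apply: mem_last.
apply: leq_trans (deg_in_le_deg setT x).
by apply: (deg_in_gt1 yz); rewrite ?inE // e_sym.
Qed.

Lemma sum_deg_nbhd_split v w : w \in nbhd e v ->
  \sum_(u in nbhd e v) deg e u =
  deg e w + (deg e v - 1) + \sum_(u in nbhd e v | u != w) (deg e u - 1).
Proof.
move=> wv; rewrite (bigD1 w) //= -addnA; congr (_ + _).
rewrite (eq_bigr (fun u => (deg e u - 1) + 1)); last first.
  by move=> u /andP[]; rewrite inE => /deg_gt0 h _; rewrite subnK.
rewrite big_split /= addnC; congr (_ + _).
rewrite sum1dep_card /deg (cardD1 w (nbhd e v)) wv add1n subSS subn0.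
by apply: eq_card => u; rewrite !inE andbC.
Qed.

Lemma longest_pendant_path_nbhd v0 v1 v2 r :
  pendant_path e [:: v0, v1, v2 & r] ->
  (forall t, pendant_path e t -> size t <= size [:: v0, v1, v2 & r]) ->
  forall x, e v1 x -> x != v2 -> deg e x = 1.
Proof.
move=> ps smax x ev1x xv2.
have pth : path e v1 (v2 :: r) by case/and5P: ps => /andP[].
have un : uniq [:: v1, v2 & r] by case/and5P: ps => _ /andP[].
have lB : last v1 (v2 :: r) \in base e by case/and5P: ps.
have v1B : v1 \notin base e by case/and5P: ps => _ _ _ _ /andP[].
have [i iT /andP[v1i v1i1]] := stage_leave v1B.
have inS := path_in_stage pth un lB (ltnW iT) v1i.
have xi : x \notin stage i.
  apply/negP => xi; have v2i : v2 \in stage i by case/and3P: inS.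
  have ev1v2 : e v1 v2 by case/andP: pth.
  have := deg_in_gt1 xv2 xi v2i ev1x ev1v2.
  by rewrite (deg_in_pruned v1i v1i1).
apply/eqP; apply: contraT => dx.
have [z [q [[pq lq] uq pz outq /(_ dx) q0]]] := pendant_path_into xi.
have longer : pendant_path e (z :: q ++ [:: v1, v2 & r]).
  apply: pendant_path_splice ps pq _ uq pz _ _; first by rewrite lq e_sym.
    apply/allP => y /(allP outq); apply: contra.
    exact: subsetP (stage_sub (ltnW iT)) y.
  apply/hasPn => y /(allP inS) yi; apply/negP => /(allP outq).
  by rewrite yi.
by move: (smax _ longer) q0; rewrite /= size_cat /=; clear; lia.
Qed.

Lemma Gab_nbhd_pendant a b v0 v1 v2 : in_Gab e a b ->
  deg e v0 = 1 -> e v0 v1 -> e v1 v2 ->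
  (forall x, e v1 x -> x != v2 -> deg e x = 1) ->
  forall x, e v2 x -> x != v1 -> deg e x = 1.
Proof.
move=> gab dv0 ev0v1 ev1v2 nbhd_v1.
have g0 := gab v0; rewrite (pendant_nbhd dv0 ev0v1) big_set1 dv0 mulr1 expr1n in g0.
have v2n : v2 \in nbhd e v1 by rewrite inE.
have g1 := gab v1; rewrite (sum_deg_nbhd_split v2n) big1 ?addn0 in g1; last first.
  by move=> u /andP[]; rewrite inE => ev1u uv2; rewrite nbhd_v1.
have v1n : v1 \in nbhd e v2 by rewrite inE e_sym.
have g2 := gab v2; rewrite (sum_deg_nbhd_split v1n) in g2.
have /eqP := Gab_chain_arith (deg_gt0 ev0v1) (deg_gt0 ev1v2) g0 g1 g2.
rewrite sum_nat_eq0 => /forallP excess x ev2x xv1.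
move/(_ x): excess; rewrite inE ev2x xv1 => /eqP dx.
by apply/eqP; rewrite eqn_leq -subn_eq0 dx (deg_gt0 ev2x).
Qed.

Lemma double_star_acyclic v1 v2 : connected_graph e ->
  (forall x, e v1 x -> x != v2 -> deg e x = 1) ->
  (forall x, e v2 x -> x != v1 -> deg e x = 1) -> ~ has_cycle e.
Proof.
move=> conn nbhd_v1 nbhd_v2 [s /and3P[s3 us cs]].
pose A := [set v1; v2] :|: nbhd e v1 :|: nbhd e v2.
have leafA w : w \in A -> w != v1 -> w != v2 -> deg e w = 1.
  rewrite !inE -!orbA => /or4P[/eqP wv1 | /eqP wv2 | ev1w | ev2w] wv1' wv2'.
  - by rewrite wv1 eqxx in wv1'.
  - by rewrite wv2 eqxx in wv2'.
  - exact: nbhd_v1.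
  - exact: nbhd_v2.
have A_closed : closed e A.
  apply: (intro_closed (sym_connect_sym e_sym)) => u w euw uA.
  have [uv1|uv1] := eqVneq u v1; first by rewrite !inE -uv1 euw !orbT.
  have [uv2|uv2] := eqVneq u v2; first by rewrite !inE -uv2 euw !orbT.
  have /pendant_nbhd nbu := leafA u uA uv1 uv2.
  have w_eq x : e u x -> w = x.
    move=> eux; have : w \in nbhd e u by rewrite inE.
    by rewrite (nbu x eux) inE => /eqP.
  move: uA; rewrite !inE (negbTE uv1) (negbTE uv2) /= => /orP[] eu.
  - by rewrite (w_eq v1) ?eqxx // e_sym.
  - by rewrite (w_eq v2) ?eqxx ?orbT // e_sym.
have inA y : y \in A by rewrite -(closed_connect A_closed (conn v2 y)) !inE eqxx orbT.
have : size s <= size [:: v1; v2].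
  apply: uniq_leq_size => // x xs; rewrite !inE.
  apply/negPn/negP; rewrite negb_or => /andP[xv1 xv2].
  by have := cycle_deg_gt1 cs us s3 xs; rewrite (leafA x (inA x) xv1 xv2).
by rewrite /= leqNgt s3.
Qed.

End Graph.

Theorem lemma1p7 (T : finType) (e : rel T) (a b : int) :
  simple_graph e -> connected_graph e -> in_Gab e a b ->
  has_cycle e -> (exists v : T, pendant e v) ->
  forall s : seq T,
    pendant_path e s ->
    (forall t : seq T, pendant_path e t -> size t <= size s) ->
    size s = 2.
Proof.
move=> [_ e_sym] conn gab cyc _ [|v0 [|v1 [|v2 r]]] // ps smax.
  case/and5P: ps => _ _ /eqP pv0 v0B _.
  by have := pendant_notin_base pv0; rewrite v0B.
have nbhd_v1 := longest_pendant_path_nbhd e_sym ps smax.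
case/and5P: ps => /and3P[ev0v1 ev1v2 _] _ /eqP pv0 _ _.
have nbhd_v2 := Gab_nbhd_pendant e_sym gab pv0 ev0v1 ev1v2 nbhd_v1.
by case: (double_star_acyclic e_sym conn nbhd_v1 nbhd_v2 cyc).
Qed.
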